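(* Let $(A,B,E)$ be a finite bipartite graph and let $\alpha\in(0,1)$. Let $T\subseteq A$ be $\alpha$-separable, i.e., there exist $S\subseteq B$ with $|S|\ge\alpha|B|$ and disjoint subsets $T_0',T_1'\subseteq T$ with $|T_0'|\ge\alpha|T|$, $|T_1'|\ge\alpha|T|$ and $|d(S,T_0')-d(S,T_1')|\ge\alpha$. Then there are $S\subseteq B$ with $|S|\geq \alpha|B|$, subsets $T_0,T_1 \subseteq T$ with $|T_0|,|T_1| \ge \frac12\alpha^2|T|$, and real numbers $d_0,d_1$ with $d_1-d_0 \geq\frac{\alpha}{4}|S|$, such that every $h\in T_0$ satisfies $e(h,S)\leq d_0$ and every $h \in T_1$ satisfies $e(h,S)\geq d_1$.
   Context: For a bipartite graph $(A,B,E)$ and sets $S\subseteq B$, $T\subseteq A$, $e(S,T)$ (also written $e(T,S)$) denotes the number of edges with one endpoint in $S$ and the other in $T$; for a single vertex $h$ we write $e(h,S)=e(\{h\},S)$. The density is $d(S,T)=\frac{e(S,T)}{|S||T|}$. *)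

From HB Require Import structures.
From mathcomp Require Import all_boot all_order all_algebra.
Set Implicit Arguments. Unset Strict Implicit. Unset Printing Implicit Defensive.
Import Order.TTheory GRing.Theory Num.Theory.
Local Open Scope ring_scope.

Definition ecount (A B : finType) (E : A -> B -> bool) (S : {set B}) (T : {set A}) : nat :=
  #|[set p : A * B | [&& p.1 \in T, p.2 \in S & E p.1 p.2]]|.

Definition evert (A B : finType) (E : A -> B -> bool) (h : A) (S : {set B}) : nat :=
  ecount E S [set h].

Definition density (R : realFieldType) (A B : finType) (E : A -> B -> bool)
  (S : {set B}) (T : {set A}) : R :=
  (ecount E S T)%:R / (#|S| * #|T|)%:R.

Definition separable (R : realFieldType) (A B : finType) (E : A -> B -> bool)
  (alpha : R) (T : {set A}) : Prop :=
  exists (S : {set B}) (T0 T1 : {set A}),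
    alpha * #|B|%:R <= #|S|%:R /\
        T0 \subset T /\ T1 \subset T /\ [disjoint T0 & T1] /\
        alpha * #|T|%:R <= #|T0|%:R /\
        alpha * #|T|%:R <= #|T1|%:R /\
        alpha <= `|density R E S T0 - density R E S T1|.

(* With [f h = e(h,S)], the density gap says that the means of [f] over [T0'] and
   [T1'] differ by at least [alpha |S|].  Markov's inequality for [f] on the low
   side and for [|S| - f] on the high side yields thresholds with an [alpha / 2]
   fraction of each side beyond them; as the two remaining means sum to at most
   [(1 - alpha) |S| <= (1 - alpha / 2)^2 |S|], the thresholds are [alpha |S| / 4]
   apart. *)

From HB Require Import structures.
From mathcomp Require Import all_boot all_order all_algebra.
From mathcomp Require Import lra.
Set Implicit Arguments. Unset Strict Implicit. Unset Printing Implicit Defensive.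
Import Order.TTheory GRing.Theory Num.Theory.
Local Open Scope ring_scope.

(* The mean over the empty set is [0], as [x / 0 = 0]. *)
Definition mean (R : numFieldType) (A : finType) (U : {set A}) (f : A -> R) : R :=
  (\sum_(h in U) f h) / #|U|%:R.

Section Means.
Variables (R : numFieldType) (A : finType) (U : {set A}) (f : A -> R).

Lemma sum_mean : \sum_(h in U) f h = mean U f * #|U|%:R.
Proof.
have [/cards0_eq ->|U_ne0] := eqVneq #|U| 0%N; first by rewrite big_set0 cards0 mulr0.
by rewrite /mean divfK // pnatr_eq0.
Qed.

Lemma mean_ge0 : {in U, forall h, 0 <= f h} -> 0 <= mean U f.
Proof. by move=> f_ge0; rewrite divr_ge0 ?sumr_ge0. Qed.

Lemma mean_le (s : R) : 0 <= s -> {in U, forall h, f h <= s} -> mean U f <= s.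
Proof.
move=> s_ge0 f_le; have [U0|U_ne0] := eqVneq #|U| 0%N.
  by rewrite /mean U0 invr0 mulr0.
rewrite ler_pdivrMr ?ltr0n ?lt0n // mulr_natr -sumr_const.
exact: ler_sum.
Qed.

End Means.

Lemma sublevel_card_ge (R : realFieldType) (A : finType) (U : {set A})
    (g : A -> R) (beta t : R) :
  {in U, forall h, 0 <= g h} -> 0 < t ->
  \sum_(h in U) g h <= (1 - beta) * t * #|U|%:R ->
  beta * #|U|%:R <= #|[set h in U | g h <= t]|%:R.
Proof.
move=> g_ge0 t_gt0 sum_le.
have cardE : #|[set h in U | g h <= t]|%:R = \sum_(h in U) (g h <= t)%R%:R :> R.
  rewrite -sum1_card natr_sum (eq_bigl (fun h => (h \in U) && (g h <= t))) => [|h];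
    last by rewrite inE.
  by rewrite big_mkcondr; apply: eq_bigr => h _; case: (g h <= t).
have markov : \sum_(h in U) (t - t * (g h <= t)%R%:R) <= \sum_(h in U) g h.
  by apply: ler_sum => h /g_ge0 gh_ge0; case: (lerP (g h) t) => /= gh_t; lra.
move: markov; rewrite sumrB -mulr_sumr -cardE sumr_const -[t *+ _]mulr_natr => markov.
by rewrite -(ler_pM2l t_gt0); lra.
Qed.

Lemma mean_gap_level_sets (R : realFieldType) (A : finType) (f : A -> R)
    (s alpha : R) (U0 U1 : {set A}) :
  (forall h, 0 <= f h <= s) -> 0 < s -> 0 < alpha ->
  alpha * s <= mean U1 f - mean U0 f ->
  exists d0 d1 : R,
    [/\ alpha / 4%:R * s <= d1 - d0,
        alpha / 2 * #|U0|%:R <= #|[set h in U0 | f h <= d0]|%:R &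
        alpha / 2 * #|U1|%:R <= #|[set h in U1 | d1 <= f h]|%:R].
Proof.
move=> f_bnd s_gt0 alpha_gt0 gap.
have mean0_ge0 : 0 <= mean U0 f by apply: mean_ge0 => h _; case/andP: (f_bnd h).
have mean1_le : mean U1 f <= s.
  by apply: mean_le => [|h _]; [exact: ltW | case/andP: (f_bnd h)].
have alpha_le1 : alpha <= 1 by rewrite -(ler_pM2r s_gt0) mul1r; lra.
(* By Markov, at most a fraction [c] of [U0] lies above [mean U0 f / c + eps]
   (symmetrically for [s - f] on [U1]); since [1 - alpha <= c ^+ 2], the two
   thresholds are at least [alpha * s / 2 - 2 * eps = alpha * s / 4] apart,
   and [eps] only serves to keep them positive. *)
set c := 1 - alpha / 2; have c_gt0 : 0 < c by rewrite /c; lra.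
set eps := alpha * s / 8%:R; have eps_gt0 : 0 < eps by rewrite /eps divr_gt0 ?mulr_gt0.
have level_gt0 x : 0 <= x -> 0 < x / c + eps.
  by move=> x_ge0; rewrite ltr_wpDl // divr_ge0 // ltW.
have level_ge x : x <= c * (x / c + eps).
  by rewrite mulrDr mulrCA divff ?gt_eqF // mulr1 lerDl mulr_ge0 // ltW.
set t0 := mean U0 f / c + eps; set t1 := (s - mean U1 f) / c + eps.
exists t0, (s - t1); split.
- have tails : mean U0 f + (s - mean U1 f) <= c * s * c.
    have := mulr_ge0 (mulr_ge0 (ltW alpha_gt0) (ltW alpha_gt0)) (ltW s_gt0).
    by rewrite /c; lra.
  have : mean U0 f / c + (s - mean U1 f) / c <= c * s by rewrite -mulrDl ler_pdivrMr.
  by rewrite /t0 /t1 /eps /c; lra.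
- apply: sublevel_card_ge => [h _||].
  - by case/andP: (f_bnd h).
  - exact: level_gt0.
  by rewrite sum_mean -/c ler_wpM2r ?level_ge.
- have -> : [set h in U1 | s - t1 <= f h] = [set h in U1 | s - f h <= t1].
    by apply/setP => h; rewrite !inE lerBlDr addrC -lerBlDr.
  apply: sublevel_card_ge => [h _||].
  - by case/andP: (f_bnd h) => _; rewrite subr_ge0.
  - by rewrite level_gt0 ?subr_ge0.
  rewrite sumrB sumr_const sum_mean -[s *+ _]mulr_natr -mulrBl -/c.
  by rewrite ler_wpM2r ?level_ge.
Qed.

Section Bipartite.
Variables (A B : finType) (E : A -> B -> bool) (S : {set B}).

Lemma ecountE (U : {set A}) :
  ecount E S U = (\sum_(h in U) #|[set b in S | E h b]|)%N.
Proof.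
rewrite /ecount -sum1_card.
rewrite (eq_bigl (fun p : A * B => (p.1 \in U) && ((p.2 \in S) && E p.1 p.2))) => [|p];
  last by rewrite inE.
rewrite -(pair_big_dep _ (fun h b => (b \in S) && E h b) (fun _ _ => 1%N)) /=.
by apply: eq_bigr => h _; rewrite sum1_card; apply: eq_card => b; rewrite inE.
Qed.

Lemma evertE (h : A) : evert E h S = #|[set b in S | E h b]|.
Proof. by rewrite /evert ecountE big_set1. Qed.

Lemma evert_le_card (h : A) : (evert E h S <= #|S|)%N.
Proof.
by rewrite evertE subset_leq_card //; apply/subsetP => b; rewrite inE => /andP[].
Qed.

Lemma density_mean (R : realFieldType) (U : {set A}) :
  density R E S U = mean U (fun h => (evert E h S)%:R) / #|S|%:R.
Proof.
rewrite /density /mean ecountE natr_sum natrM invfM mulrA mulrAC.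
by congr (_ * _ * _); apply: eq_bigr => h _; rewrite evertE.
Qed.

End Bipartite.

Theorem claim4 (R : realFieldType) (A B : finType) (E : A -> B -> bool)
  (alpha : R) (T : {set A}) :
  0 < alpha -> alpha < 1 -> separable E alpha T ->
  exists (S : {set B}) (T0 T1 : {set A}) (d0 d1 : R),
    alpha * #|B|%:R <= #|S|%:R /\
        T0 \subset T /\ T1 \subset T /\
        2^-1 * alpha ^+ 2 * #|T|%:R <= #|T0|%:R /\
        2^-1 * alpha ^+ 2 * #|T|%:R <= #|T1|%:R /\
        alpha / 4%:R * #|S|%:R <= d1 - d0 /\
        (forall h, h \in T0 -> (evert E h S)%:R <= d0) /\
        (forall h, h \in T1 -> d1 <= (evert E h S)%:R).
Proof.
move=> alpha_gt0 _ [S [U0 [U1 [S_big [sU0T [sU1T [_ [U0_big [U1_big gap]]]]]]]]].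
wlog {gap} gap : U0 U1 sU0T sU1T U0_big U1_big /
    alpha <= density R E S U1 - density R E S U0.
  move=> oriented; move: gap; rewrite ler_normr => /orP[gap|].
    exact: (oriented U1 U0).
  by rewrite opprB; apply: oriented.
pose f h : R := (evert E h S)%:R.
have f_bnd h : 0 <= f h <= #|S|%:R by rewrite ler0n ler_nat evert_le_card.
have S_gt0 : 0 < #|S|%:R :> R.
  rewrite ltr0n lt0n; apply: contraTneq gap => S0.
  by rewrite !density_mean S0 invr0 !mulr0 subrr -ltNge.
have mean_gap : alpha * #|S|%:R <= mean U1 f - mean U0 f.
  by rewrite -ler_pdivlMr // mulrBl -!density_mean.
have [d0 [d1 [d_gap T0_big T1_big]]] :=
  mean_gap_level_sets f_bnd S_gt0 alpha_gt0 mean_gap.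
have shrink (U : {set A}) : alpha * #|T|%:R <= #|U|%:R ->
    2^-1 * alpha ^+ 2 * #|T|%:R <= alpha / 2 * #|U|%:R.
  by move=> U_big; nra.
exists S, [set h in U0 | f h <= d0], [set h in U1 | d1 <= f h], d0, d1.
do ![split] => //.
- by rewrite setIdE (subset_trans (subsetIl _ _)).
- by rewrite setIdE (subset_trans (subsetIl _ _)).
- exact: le_trans (shrink _ U0_big) T0_big.
- exact: le_trans (shrink _ U1_big) T1_big.
- by move=> h; rewrite inE => /andP[].
- by move=> h; rewrite inE => /andP[].
Qed.
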